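(* Fix a slope bound $s\ge0$, and let $\alpha=(a_1,\dots,a_w)$. Let $a_i,a_j\in\mathbb{L}^{t+1}_\alpha$ with $i<j$, and suppose $a_k\in\mathbb{L}^t_\alpha$ is the leftmost slope-proper predecessor of $a_i$. Then every slope-proper predecessor of $a_j$ is either $a_k$ or lies to the right of $a_k$ in $\mathbb{L}^t_\alpha$. In particular, the leftmost slope-proper predecessor of $a_j$, if it exists, is $a_k$ or an item to the right of $a_k$.
   Context: Let $\alpha=(a_1,\dots,a_w)$ be a finite sequence of real numbers, with items identified by their positions. Increasing subsequences are non-strict. $a_j$ is compatible with $a_i$ if $j<i$ and $a_j\le a_i$. $RL_\alpha(a)$ is the maximum length of an increasing subsequence ending at $a$. $a_j$ is a predecessor of $a_i$ if it is compatible with $a_i$ and $RL_\alpha(a_j)=RL_\alpha(a_i)-1$. The horizontal list $\mathbb{L}^t_\alpha$ is the list of items of rising length $t$, ordered by position; ''left of'' means earlier position. Items are colored black or non-black recursively by level: all items of $\mathbb{L}^1_\alpha$ are non-black, and an item $a_i\in\mathbb{L}^{t+1}_\alpha$ is non-black iff it has a slope-proper predecessor. Here a slope-proper predecessor of $a_i$ is a non-black predecessor $a_k$ of $a_i$ with $(a_i-a_k)/(i-k)\ge s$. *)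

From HB Require Import structures.
From mathcomp Require Import all_boot all_order all_algebra.
Set Implicit Arguments. Unset Strict Implicit. Unset Printing Implicit Defensive.
Import Order.TTheory GRing.Theory Num.Theory.

(* A sequence alpha = (a_1,...,a_w) is a function 'I_w -> R; items are
   identified with their positions (0-based). *)

Section Defs.
Variables (R : realFieldType) (w : nat) (alpha : 'I_w -> R).
Local Open Scope ring_scope.

Definition inc_subseq_ending (i : 'I_w) (S : {set 'I_w}) : bool :=
  [&& i \in S, [forall x in S, (x <= i)%N] &
      [forall x in S, forall y in S, (x < y)%N ==> (alpha x <= alpha y)]].

Definition RL (i : 'I_w) : nat :=
  \max_(S : {set 'I_w} | inc_subseq_ending i S) #|S|.

Definition compatible (j i : 'I_w) : bool := (j < i)%N && (alpha j <= alpha i).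

Definition predecessor (j i : 'I_w) : bool :=
  compatible j i && (RL j == (RL i).-1)%N.

Definition inL (t : nat) (i : 'I_w) : bool := (RL i == t)%N.

Definition slope_ok (s : R) (k i : 'I_w) : bool :=
  s <= (alpha i - alpha k) / ((nat_of_ord i)%:R - (nat_of_ord k)%:R).

Fixpoint nonblack_lvl (s : R) (t : nat) (i : 'I_w) : bool :=
  match t with
  | 0 => false
  | t'.+1 =>
      inL t'.+1 i &&
      (if t' is 0 then true
       else [exists k : 'I_w,
               [&& predecessor k i, nonblack_lvl s t' k & slope_ok s k i]])
  end.

Definition nonblack (s : R) (i : 'I_w) : bool := nonblack_lvl s (RL i) i.

Definition slope_proper_pred (s : R) (k i : 'I_w) : bool :=
  [&& predecessor k i, nonblack s k & slope_ok s k i].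

Definition leftmost_spp (s : R) (k i : 'I_w) : Prop :=
  slope_proper_pred s k i /\
  forall k' : 'I_w, slope_proper_pred s k' i -> (k <= k')%N.

End Defs.

(* Items of one horizontal list are strictly decreasing from left to right,
   since a compatible pair has strictly increasing rising lengths.  Hence if
   a slope-proper predecessor k' of a_j lay left of a_k, then a_(k') <= a_j < a_i,
   and its slope to a_i would be at least its slope to a_j (a larger rise over
   a shorter run, as s >= 0): k' would be a slope-proper predecessor of a_i
   left of the leftmost one. *)
From HB Require Import structures.
From mathcomp Require Import all_boot all_order all_algebra.
Set Implicit Arguments. Unset Strict Implicit. Unset Printing Implicit Defensive.
Import Order.TTheory GRing.Theory Num.Theory.
Local Open Scope ring_scope.

Section RisingLength.
Variables (R : realFieldType) (w : nat) (alpha : 'I_w -> R).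

Lemma inc_subseq_ending1 (p : 'I_w) : inc_subseq_ending alpha p [set p].
Proof.
apply/and3P; split; first by rewrite in_set1.
  by apply/forallP => x; apply/implyP; rewrite in_set1 => /eqP ->.
apply/forallP => x; apply/implyP; rewrite in_set1 => /eqP ->.
by apply/forallP => y; apply/implyP; rewrite in_set1 => /eqP ->; rewrite ltnn.
Qed.

Lemma RL_attained (p : 'I_w) :
  exists2 S, inc_subseq_ending alpha p S & RL alpha p = #|S|.
Proof.
have nonempty : (0 < #|[pred S | inc_subseq_ending alpha p S]|)%N.
  by apply/card_gt0P; exists [set p]; exact: inc_subseq_ending1.
have [S HS eqS] := eq_bigmax_cond (fun S : {set 'I_w} => #|S|) nonempty.
by exists S; rewrite // /RL -eqS.
Qed.

Lemma inc_subseq_ending_setU1 (p q : 'I_w) (S : {set 'I_w}) :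
  compatible alpha p q -> inc_subseq_ending alpha p S ->
  inc_subseq_ending alpha q (q |: S).
Proof.
move=> /andP[pq apq] /and3P[pS /forallP Sle /forallP Sinc].
have leS x : x \in S -> (x <= p)%N by move/(implyP (Sle x)).
have incS x y : x \in S -> y \in S -> (x < y)%N -> alpha x <= alpha y.
  by move=> xS yS; apply/implyP/(implyP (forallP (implyP (Sinc x) xS) y)).
have le_p x : x \in S -> alpha x <= alpha p.
  move=> xS; case: (ltngtP x p) => [xp | px | /val_inj -> //].
    exact: incS.
  by move: (leS x xS); rewrite leqNgt px.
apply/and3P; split; first exact: setU11.
  apply/forallP => x; apply/implyP; rewrite in_setU1 => /orP[/eqP -> // | xS].
  exact: leq_trans (leS x xS) (ltnW pq).
apply/forallP => x; apply/implyP; rewrite in_setU1 => /orP[/eqP -> | xS].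
  apply/forallP => y; apply/implyP; rewrite in_setU1 => /orP[/eqP -> | yS].
    by rewrite ltnn.
  by rewrite ltnNge (leq_trans (leS y yS) (ltnW pq)).
apply/forallP => y; apply/implyP; rewrite in_setU1 => /orP[/eqP -> | yS].
  by apply/implyP => _; exact: le_trans (le_p x xS) apq.
by apply/implyP; exact: incS.
Qed.

Lemma RL_lt_compatible (p q : 'I_w) :
  compatible alpha p q -> (RL alpha p < RL alpha q)%N.
Proof.
move=> pq; have [S HS ->] := RL_attained p.
have qS : q \notin S.
  apply/negP => qS; case/and3P: HS => _ /forallP/(_ q)/implyP/(_ qS).
  by rewrite leqNgt (andP pq).1.
have := @leq_bigmax_cond _ _ (fun S : {set 'I_w} => #|S|) _
  (inc_subseq_ending_setU1 pq HS).
by rewrite cardsU1 qS.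
Qed.

Lemma same_RL_decreasing (i j : 'I_w) :
  RL alpha i = RL alpha j -> (i < j)%N -> alpha j < alpha i.
Proof.
move=> Rij ij; rewrite ltNge; apply/negP => aij.
by have := RL_lt_compatible (introT andP (conj ij aij)); rewrite Rij ltnn.
Qed.

Lemma slope_ok_shorter_run (s : R) (k i j : 'I_w) :
  0 <= s -> (k < i)%N -> (i < j)%N -> alpha j <= alpha i ->
  slope_ok alpha s k j -> slope_ok alpha s k i.
Proof.
move=> s0 ki ij aji; rewrite /slope_ok.
have runi : 0 < (i : nat)%:R - (k : nat)%:R :> R by rewrite subr_gt0 ltr_nat.
have runj : 0 < (j : nat)%:R - (k : nat)%:R :> R
  by rewrite subr_gt0 ltr_nat (ltn_trans ki ij).
rewrite !ler_pdivlMr // => slj.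
apply: le_trans (le_trans slj (lerB aji (lexx _))).
by rewrite ler_wpM2l // lerB // ler_nat ltnW.
Qed.

Lemma slope_proper_pred_left (s : R) (k i j : 'I_w) :
  0 <= s -> RL alpha i = RL alpha j -> (i < j)%N -> (k < i)%N ->
  slope_proper_pred alpha s k j -> slope_proper_pred alpha s k i.
Proof.
move=> s0 Rij ij ki /and3P[/andP[/andP[_ akj] /eqP Rk] nbk slj].
have aji := ltW (same_RL_decreasing Rij ij).
apply/and3P; split => //; last exact: slope_ok_shorter_run slj.
by rewrite /predecessor /compatible ki (le_trans akj aji) Rk Rij eqxx.
Qed.

End RisingLength.

Theorem mainTheorem12 (R : realFieldType) (s : R) (w : nat)
    (alpha : 'I_w -> R) (t : nat) (i j k : 'I_w) :
  0 <= s ->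
  inL alpha t.+1 i -> inL alpha t.+1 j -> (i < j)%N ->
  inL alpha t k ->
  leftmost_spp alpha s k i ->
  (forall k' : 'I_w, slope_proper_pred alpha s k' j -> k' = k \/ (k < k')%N) /\
  (forall k' : 'I_w, leftmost_spp alpha s k' j -> k' = k \/ (k < k')%N).
Proof.
move=> s0 /eqP Li /eqP Lj ij _ [spp_k leftmost_k].
have ki : (k < i)%N by case/and3P: spp_k => /andP[/andP[]].
have not_left k' : slope_proper_pred alpha s k' j -> k' = k \/ (k < k')%N.
  move=> spp_k'; case: (ltngtP k k') => [kk' | k'k | /val_inj ->]; [by right | | by left].
  have := leftmost_k k' (slope_proper_pred_left s0 (etrans Li (esym Lj)) ij
    (ltn_trans k'k ki) spp_k').
  by rewrite leqNgt k'k.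
by split=> // k' [spp_k' _]; exact: not_left.
Qed.
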